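(* Let $0<A<1$ and let $\theta\in C(\mathbb{R})$ with $\lim_{|x|\to\infty}\theta(x)=0$. Then there is a piecewise constant function $G>0$ on $\mathbb{R}$ such that $G(x)\ge\max(|\theta(x)|,\theta(x)^2)$ for all $x\in\mathbb{R}$, $G$ is even on $\mathbb{R}$ and nonincreasing on $[0,+\infty)$, $\lim_{x\to+\infty}G(x)=0$, and there is $\sigma>0$ such that for all $i\in\mathbb{N}$, $$(\rho_i*G)(x)\le\frac{\sigma}{1+i}G(x)\quad\text{for all }x\in\mathbb{R}.$$
   Context: $\lambda_i:=-1+(2i+1)A$ for $i\in\mathbb{N}$ (so $\lambda_0=A-1<0$ and $\lambda_i-\lambda_0=2iA$). For $i\ge1$, $\rho_i(z):=\frac{1}{2\sqrt{\lambda_i-\lambda_0}}e^{-\sqrt{\lambda_i-\lambda_0}|z|}$, and $\rho_0(z):=\frac{1}{2\sqrt{-\lambda_0}}e^{-\sqrt{-\lambda_0}|z|}$; $*$ denotes convolution on $\mathbb{R}$. *)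

From HB Require Import structures.
From mathcomp Require Import all_boot all_order all_algebra.
From mathcomp Require Import all_classical all_reals all_analysis.
Set Implicit Arguments. Unset Strict Implicit. Unset Printing Implicit Defensive.
Import Order.TTheory GRing.Theory Num.Theory.
Import numFieldNormedType.Exports.
Local Open Scope ring_scope.
Local Open Scope classical_set_scope.

Definition lam (R : realType) (A : R) (i : nat) : R := -1 + (2 * i%:R + 1) * A.

Definition rho_c (R : realType) (A : R) (i : nat) : R :=
  if i is 0 then - lam A 0 else lam A i - lam A 0.

Definition rho_kernel (R : realType) (A : R) (i : nat) (z : R) : R :=
  (2 * Num.sqrt (rho_c A i))^-1 * expR (- (Num.sqrt (rho_c A i) * `|z|)).

(* convolution (f * g)(x) = int_R f(x - y) g(y) dy, as a Lebesgue integral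
   in the extended reals (well defined for nonnegative integrands) *)
Definition convolution (R : realType) (f g : R -> R) (x : R) : \bar R :=
  (\int[@lebesgue_measure R]_(y in [set: R]) (f (x - y) * g y)%:E)%E.

Definition piecewise_constant (R : realType) (G : R -> R) : Prop :=
  forall a b : R, a < b ->
    exists (n : nat) (t : nat -> R),
      [/\ t 0%N = a, t n = b,
          (forall k, (k < n)%N -> t k < t k.+1) &
          (forall k, (k < n)%N -> forall x y,
              t k < x < t k.+1 -> t k < y < t k.+1 -> G x = G y)].

(* Majorize max(|theta|, theta^2) by a positive nonincreasing sequence a_n
   tending to 0, read at n = floor |x| (take a_n = sup over |x| >= n, plus
   1/(n+1)).  Then slow the decay down: g_(n+1) = max(a_(n+1), e^-k g_n)
   still tends to 0, but g_m <= e^(k (n - m)) g_n, so G(x) = g(floor |x|)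
   satisfies G(y) <= e^k e^(k |x - y|) G(x).  Convolving such a G with the
   kernel e^(-s |z|) / (2 s), s >= 2 k, costs at most 2 e^k G(x) / s^2, and
   for rho_i we have s^2 = 1 - A if i = 0 and s^2 = 2 i A otherwise, which is
   of order 1 + i. *)

From HB Require Import structures.
From mathcomp Require Import all_boot all_order all_algebra.
From mathcomp Require Import all_classical all_reals all_analysis.
From mathcomp Require Import measurable_realfun ring lra zify.
Import Order.TTheory GRing.Theory Num.Theory.
Import numFieldNormedType.Exports.
Set Implicit Arguments. Unset Strict Implicit. Unset Printing Implicit Defensive.
Local Open Scope ring_scope.
Local Open Scope classical_set_scope.

(* The nonnegative integral is a supremum over simple minorants, so no
   measurability is needed for its monotonicity. *)
Lemma ge0_le_integralT d (T : measurableType d) (R : realType)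
    (mu : {measure set T -> \bar R}) (f g : T -> \bar R) :
  (forall x, (0 <= f x)%E) -> (forall x, (f x <= g x)%E) ->
  (\int[mu]_x f x <= \int[mu]_x g x)%E.
Proof.
move=> f0 fg; have g0 x : (0 <= g x)%E := le_trans (f0 x) (fg x).
rewrite !ge0_integralTE //=.
apply: ge_ereal_sup => _ [h hf <-]; apply: ereal_sup_ubound.
by exists h => // x; exact: le_trans (hf x) (fg x).
Qed.

Section exponential_kernel.
Variable R : realType.
Implicit Types a b x : R.

Let mu := @lebesgue_measure R.

Let is_derive_affine a b x : is_derive x 1 (fun y => - (b * (y - a))) (- b).
Proof.
have -> : (fun y => - (b * (y - a))) = cst (- b) * id + cst (b * a).
  by apply: funext => y; rewrite !fctE; ring.
by apply: is_derive_eq; rewrite !fctE /GRing.scale /= mulr1 mulr0 !addr0.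
Qed.

Lemma is_derive_expR_affine a b x : b != 0 ->
  is_derive x 1 (fun y => - (b^-1 * expR (- (b * (y - a)))))
    (expR (- (b * (x - a)))).
Proof.
move=> b0.
have : is_derive x 1 (expR \o (fun y => - (b * (y - a))))
    (expR (- (b * (x - a))) * - b) by exact: is_derive1_comp.
move=> dexp; apply: is_derive_eq.
by rewrite /GRing.scale /= !mulrN opprK mulrCA mulVf // mulr1.
Qed.

Lemma continuous_expR_dist a b : continuous (fun y => expR (- (b * `|a - y|))).
Proof.
move=> y; apply: continuous_comp; last exact: continuous_expR.
apply: cvgN; apply: cvgMl_tmp.
apply: (continuous_comp (f := fun y : R => a - y) (g := Num.norm)).
  by apply: cvgB; [exact: cvg_cst | exact: cvg_id].
exact: norm_continuous.
Qed.

Lemma integral_expR_itvcy a b : 0 < b ->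
  (\int[mu]_(y in `[a, +oo[) (expR (- (b * (y - a))))%:E = (b^-1)%:E)%E.
Proof.
move=> b_gt0; have b0 : b != 0 by rewrite gt_eqF.
have dF x := is_derive_expR_affine a x b0.
have cF : continuous (fun y => - (b^-1 * expR (- (b * (y - a))))).
  by move=> y; apply/differentiable_continuous/derivable1_diffP; case: (dF y).
have Fcvg : - (b^-1 * expR (- (b * (y - a)))) @[y --> +oo] --> - (b^-1 * 0).
  have lin : b * (y - a) @[y --> +oo] --> +oo.
    apply/cvgryPge => M; near=> y; rewrite -ler_pdivrMl // lerBrDr.
    by near: y; apply: nbhs_pinfty_ge; exact: num_real.
  exact: cvgN (@cvgMl_tmp _ _ _ _ _ b^-1 _ (cvg_comp _ _ lin (@cvgr_expR R))).
rewrite (ge0_continuous_FTC2y _ _ Fcvg) //.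
- by rewrite -EFinB (subrr a) !mulr0 !oppr0 expR0 mulr1 sub0r opprK.
- apply: continuous_subspaceT => y; apply: continuous_comp; last exact: continuous_expR.
  by apply/differentiable_continuous/derivable1_diffP; case: (is_derive_affine a b y).
- exact/cvg_at_right_filter/cF.
- by move=> x _; rewrite derive1E; case: (dF x).
Unshelve. all: end_near. Qed.

Lemma integral_expR_dist a b : 0 < b ->
  (\int[mu]_y (expR (- (b * `|a - y|)))%:E = (2 / b)%:E)%E.
Proof.
move=> b_gt0.
have mf : measurable_fun [set: R] (EFin \o (fun y => expR (- (b * `|a - y|)))).
  by apply/measurable_EFinP; apply: continuous_measurable_fun; exact: continuous_expR_dist.
rewrite -(setUv `[a, +oo[%classic) ge0_integral_setU //=; first last.
- exact/disj_setPCl.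
- by rewrite setUv.
- exact: measurableC.
rewrite mulr_natl mulr2n EFinD; congr (_ + _)%E.
  rewrite -(integral_expR_itvcy a b_gt0); apply: eq_integral => y.
  rewrite inE /= in_itv /= andbT => ay.
  by rewrite distrC ger0_norm // subr_ge0.
rewrite setCitvr integral_itv_bndo_bndc; last exact: measurable_funTS.
have := @ge0_integration_by_substitutionNy R (fun y => expR (- (b * `|a - y|))) (- a).
rewrite opprK => ->; first last.
- by move=> y _; exact: expR_ge0.
- exact/continuous_subspaceT/continuous_expR_dist.
rewrite -(integral_expR_itvcy (- a) b_gt0); apply: eq_integral => y.
rewrite inE /= in_itv /= andbT => ay.
by rewrite /= !opprK (addrC y) ger0_norm //; lra.
Qed.

(* Writing the kernel of width [s] as a kernel of width [s - k] times
   [expR (- k |x - y|)] absorbs the growth of [G]. *)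
Lemma convolution_expR_kernel_le (G : R -> R) (s k C x : R) :
  0 < k -> 2 * k <= s -> 0 <= C -> (forall y, 0 <= G y) ->
  (forall y, G y <= C * expR (k * `|x - y|) * G x) ->
  (convolution (fun z => (2 * s)^-1 * expR (- (s * `|z|)))%R G x
    <= (2 * C * G x / s ^+ 2)%:E)%E.
Proof.
move=> k_gt0 ks C0 G0 HG; have s_gt0 : 0 < s by lra.
have sk_gt0 : 0 < s - k by lra.
set K := C * G x / (2 * s).
have K0 : 0 <= K by rewrite /K !mulr_ge0 // invr_ge0; lra.
apply: (@le_trans _ _ (\int[mu]_y (K%:E * (expR (- ((s - k) * `|x - y|)))%:E))%E).
  apply: ge0_le_integralT => y.
    by rewrite lee_fin !mulr_ge0 ?expR_ge0 // invr_ge0; lra.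
  rewrite -EFinM lee_fin.
  have -> : expR (- ((s - k) * `|x - y|))
      = expR (- (s * `|x - y|)) * expR (k * `|x - y|) by rewrite -expRD; congr expR; ring.
  have ker0 : 0 <= (2 * s)^-1 * expR (- (s * `|x - y|)).
    by rewrite mulr_ge0 ?expR_ge0 // invr_ge0; lra.
  by apply: le_trans (ler_wpM2l ker0 (HG y)) _; rewrite /K; lra.
rewrite ge0_integralZl_EFin //; last first.
  by apply/measurable_EFinP; apply: continuous_measurable_fun; exact: continuous_expR_dist.
rewrite integral_expR_dist // -EFinM lee_fin.
have hsk : 2 / (s - k) <= 4 / s.
  by rewrite ler_pdivrMr // mulrAC ler_pdivlMr //; lra.
by apply: le_trans (ler_wpM2l K0 hsk) _; rewrite /K; lra.
Qed.
End exponential_kernel.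

Section damped_majorant.
Variables (R : realType) (a : nat -> R) (q : R).
Hypotheses (q_gt0 : 0 < q) (q_lt1 : q < 1).
Hypotheses (a_gt0 : forall n, 0 < a n) (a_noninc : nonincreasing_seq a).

(* The smallest majorant of [a] whose ratio of consecutive terms is at
   least [q]. *)
Fixpoint damped_majorant n :=
  if n is n'.+1 then Num.max (a n) (q * damped_majorant n') else a 0.

Local Notation g := damped_majorant.

Lemma damped_majorant_ge n : a n <= g n.
Proof. by case: n => [|n] //=; rewrite le_max lexx. Qed.

Lemma damped_majorant_gt0 n : 0 < g n.
Proof. exact: lt_le_trans (a_gt0 n) (damped_majorant_ge n). Qed.

Lemma damped_majorant_noninc : nonincreasing_seq g.
Proof.
apply/nonincreasing_seqP => n /=; rewrite ge_max; apply/andP; split.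
  exact: le_trans (a_noninc (leqnSn n)) (damped_majorant_ge n).
by rewrite ger_pMl ?damped_majorant_gt0 // ltW.
Qed.

Lemma damped_majorant_geM m j : q ^+ j * g m <= g (m + j).
Proof.
elim: j => [|j IH]; first by rewrite mul1r addn0.
by rewrite addnS /= le_max exprS -mulrA ler_pM2l // IH orbT.
Qed.

(* [n - m] is truncated, so this also covers [n <= m]. *)
Lemma damped_majorant_leM m n : g m <= q ^- (n - m) * g n.
Proof.
have [mn|nm] := leqP m n; last first.
  have -> : (n - m = 0)%N by apply/eqP; rewrite subn_eq0 ltnW.
  by rewrite expr0 invr1 mul1r damped_majorant_noninc // ltnW.
rewrite -ler_pdivrMl ?invr_gt0 ?exprn_gt0 // invrK.
by have := damped_majorant_geM m (n - m); rewrite subnKC.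
Qed.

(* The limit [l] of [g] satisfies [l <= 0 + q l], hence vanishes. *)
Lemma damped_majorant_cvg0 : a @ \oo --> 0 -> g @ \oo --> 0.
Proof.
move=> a_cvg0.
have g0 n : 0 <= g n by exact/ltW/damped_majorant_gt0.
have lb : has_lbound (range g) by exists 0 => _ [n _ <-].
have g_cvg := nonincreasing_cvgn damped_majorant_noninc lb.
set l := inf _ in g_cvg.
have l_ge0 : 0 <= l by apply: cvgr_to_ge g_cvg _; exact: nearW.
have gS : g n.+1 @[n --> \oo] --> l by rewrite (cvg_shiftS g).
have aS : a n.+1 @[n --> \oo] --> 0 by rewrite (cvg_shiftS a).
have l_le : l <= 0 + q * l.
  have qg : q * g n @[n --> \oo] --> q * l by apply: cvgMl_tmp.
  apply: (ler_cvg_to gS (cvgD aS qg)).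
  by near=> n; rewrite /= ge_max lerDl lerDr mulr_ge0 // ltW.
rewrite (_ : l = 0) // in g_cvg; apply/eqP; rewrite eq_le l_ge0 andbT.
have : (1 - q) * l <= 0 by lra.
by rewrite pmulr_rle0 // subr_gt0.
Unshelve. all: end_near. Qed.
End damped_majorant.

Section unit_steps.
Variable R : realType.

Lemma piecewise_constant_unit_steps (G : R -> R) :
  (forall (z : int) (x y : R), z%:~R < x < z%:~R + 1 -> z%:~R < y < z%:~R + 1 ->
     G x = G y) ->
  piecewise_constant G.
Proof.
move=> Gz a b ab.
have /andP [fa af] := floor_itv a; have /andP [cb bc] := ceil_itv b.
rewrite intrD1 in af; rewrite intrB in cb.
set f := (Num.floor a)%:~R in fa af; set c := (Num.ceil b)%:~R in cb bc.
pose n := `|Num.ceil b - Num.floor a|%N.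
have nE : (n%:R : R) = c - f.
  rewrite -[n%:R]/((n%:Z)%:~R) /n gez0_abs ?intrB // subr_ge0 -(ler_int R).
  by rewrite -/f -/c; lra.
pose t k := Num.max a (Num.min b (f + k%:R)).
have step_lt_b k : (k < n)%N -> f + k%:R < b.
  by rewrite -(ler_nat R) nE -natr1 => kn; lra.
have tE k : (k < n)%N -> t k = Num.max a (f + k%:R).
  by move=> /step_lt_b kb; rewrite /t (min_idPr (ltW kb)).
have t_ge k : (k < n)%N -> f + k%:R <= t k by move=> /tE ->; rewrite le_max lexx orbT.
have t_le k : t k.+1 <= f + k%:R + 1.
  by rewrite /t -natr1 addrA ge_max ge_min lexx orbT andbT; have := ler0n R k; lra.
exists n, t; split.
- by rewrite /t addr0 (min_idPr (le_trans fa (ltW ab))) (max_idPl fa).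
- by rewrite /t nE subrKC (min_idPl bc) (max_idPr (ltW ab)).
- move=> k kn; rewrite (tE k kn) /t -natr1 addrA.
  have kb := step_lt_b k kn.
  have ak : a < f + k%:R + 1 by have := ler0n R k; lra.
  by rewrite lt_max lt_min !gt_max ab kb ak ltrDl ltr01 orbT.
- move=> k kn x y /andP [tx xt] /andP [ty yt].
  have zE : ((Num.floor a + k%:Z)%:~R : R) = f + k%:R by rewrite intrD -pmulrn.
  have lo := t_ge k kn; have hi := t_le k.
  by apply: (Gz (Num.floor a + k%:Z)); rewrite zE; apply/andP; split; lra.
Qed.

Lemma truncn_norm_unit_step (z : int) (x y : R) :
  z%:~R < x < z%:~R + 1 -> z%:~R < y < z%:~R + 1 ->
  Num.truncn `|x| = Num.truncn `|y|.
Proof.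
suff tE (u : R) : z%:~R < u < z%:~R + 1 ->
    Num.truncn `|u| = if z is Negz n then n else `|z|%N by move=> /tE -> /tE ->.
case: z => n /andP [lo hi]; apply: truncn_def.
  have n0 := ler0n R n; rewrite -pmulrn in lo hi; have u0 : 0 <= u by lra.
  by rewrite ger0_norm // -natr1; apply/andP; split; lra.
move: lo hi; rewrite NegzE mulrNz -pmulrn -natr1 => lo hi.
have n0 := ler0n R n; have u0 : u < 0 by lra.
by rewrite ltr0_norm //; apply/andP; split; lra.
Qed.

Lemma piecewise_constant_truncn_norm (g : nat -> R) :
  piecewise_constant (fun x : R => g (Num.truncn `|x|)).
Proof.
apply: piecewise_constant_unit_steps => z x y hx hy.
by rewrite (truncn_norm_unit_step hx hy).
Qed.
End unit_steps.

Section vanishing_at_infinity.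
Variable R : realType.
Implicit Types (f : R -> R) (e : R).

Lemma cvg0_norm_le_far f : f x @[x --> +oo] --> 0 -> f x @[x --> -oo] --> 0 ->
  forall e, 0 < e -> exists T, forall x, T <= `|x| -> `|f x| <= e.
Proof.
move=> fp fm e e0.
have [M1 [_ HM1]] := (cvgr0Pnorm_le _).1 fp e e0.
have [M2 [_ HM2]] := (cvgr0Pnorm_le _).1 fm e e0.
pose T := `|M1| + `|M2| + 1.
have M1T : M1 < T by have := ler_norm M1; have := normr_ge0 M2; rewrite /T; lra.
have TM2 : - T < M2.
  by have := ler_norm (- M2); have := normr_ge0 M1; rewrite normrN /T; lra.
exists T => x; have [x0|x0] := leP 0 x.
  by rewrite ger0_norm // => Tx; apply: HM1; lra.
by rewrite ltr0_norm // => Tx; apply: HM2; lra.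
Qed.

Lemma continuous_cvg0_bounded f : continuous f ->
  f x @[x --> +oo] --> 0 -> f x @[x --> -oo] --> 0 ->
  exists B, forall x, `|f x| <= B.
Proof.
move=> fc fp fm.
have [T HT] := cvg0_norm_le_far fp fm ltr01.
have nfc : {within `[- `|T|, `|T|], continuous (fun x => `|f x|)}.
  apply: continuous_subspaceT => x.
  exact: continuous_comp (fc x) (@norm_continuous _ R^o _).
have hT : - `|T| <= `|T| by have := normr_ge0 T; lra.
have [c _ Hc] := EVT_max hT nfc.
exists (Num.max `|f c| 1) => x; rewrite le_max.
have [xT|xT] := leP `|x| `|T|.
  by rewrite Hc // in_itv /= -ler_norml.
by rewrite HT ?orbT // (le_trans (ler_norm T)) // ltW.
Qed.

Lemma max_norm_sqr_le (t u : R) : `|t| <= u ->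
  Num.max `|t| (t ^+ 2) <= Num.max u (u ^+ 2).
Proof.
move=> tu; rewrite ge_max !le_max tu /=; apply/orP; right.
have := normr_ge0 t; rewrite -[t ^+ 2]ger0_norm ?sqr_ge0 // normrX; nra.
Qed.

Lemma max_norm_sqr_bounded f : continuous f ->
  f x @[x --> +oo] --> 0 -> f x @[x --> -oo] --> 0 ->
  exists B, forall x, Num.max `|f x| (f x ^+ 2) <= B.
Proof.
move=> fc fp fm; have [B HB] := continuous_cvg0_bounded fc fp fm.
by exists (Num.max B (B ^+ 2)) => x; exact: max_norm_sqr_le.
Qed.

Lemma max_norm_sqr_le_far f : f x @[x --> +oo] --> 0 -> f x @[x --> -oo] --> 0 ->
  forall e, 0 < e -> exists T, forall x, T <= `|x| -> Num.max `|f x| (f x ^+ 2) <= e.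
Proof.
move=> fp fm e e0; pose u := Num.min e 1.
have u0 : 0 < u by rewrite lt_min e0 ltr01.
have [T HT] := cvg0_norm_le_far fp fm u0.
exists T => x /HT /max_norm_sqr_le /le_trans; apply.
have ue : u <= e by rewrite ge_min lexx.
have u1 : u <= 1 by rewrite ge_min lexx orbT.
by rewrite ge_max ue /=; nra.
Qed.
End vanishing_at_infinity.

Lemma nonincreasing_majorant_seq (R : realType) (m : R -> R) :
  (forall x, 0 <= m x) -> (exists B, forall x, m x <= B) ->
  (forall e, 0 < e -> exists T, forall x, T <= `|x| -> m x <= e) ->
  exists a : nat -> R, [/\ forall n, 0 < a n, nonincreasing_seq a,
    a @ \oo --> 0 & forall x, m x <= a (Num.truncn `|x|)].
Proof.
move=> m0 [B mB] m_far.
pose S n := [set m x | x in [set x : R | n%:R <= `|x|]].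
have S_ub n : has_ubound (S n) by exists B => _ [x _ <-].
have S_sup n x : n%:R <= `|x| -> m x <= sup (S n).
  by move=> nx; apply: ub_le_sup => //; exists x.
have sup_ge0 n : 0 <= sup (S n).
  by apply: le_trans (m0 n%:R) (S_sup _ _ _); rewrite ger0_norm.
have S_ne n : S n !=set0 by exists (m n%:R), n%:R => //=; rewrite ger0_norm.
exists (fun n => sup (S n) + n.+1%:R^-1); split.
- by move=> n; rewrite ltr_wpDl // invr_gt0 ltr0n.
- apply/nonincreasing_seqP => n; apply: lerD.
    by apply: ge_sup => // _ [x /= nx <-]; apply/S_sup/le_trans/nx; rewrite ler_nat.
  by rewrite lef_pV2 ?posrE ?ltr0n // ler_nat.
- apply/cvgr0Pnorm_le => e e0.
  have [T HT] : exists T, forall x, T <= `|x| -> m x <= e / 2.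
    by apply: m_far; rewrite divr_gt0.
  near=> n.
  have supe : sup (S n) <= e / 2.
    apply: ge_sup => // _ [x /= nx <-]; apply: HT; apply: le_trans nx.
    by near: n; exact: nbhs_infty_ger.
  have inve : n.+1%:R^-1 <= e / 2.
    rewrite -[e / 2]invf_div lef_pV2 ?posrE ?ltr0n ?divr_gt0 // -natr1.
    suff : 2 / e <= n%:R by lra.
    by near: n; exact: nbhs_infty_ger.
  by rewrite ger0_norm ?addr_ge0 ?invr_ge0 // [e]splitr lerD.
- by move=> x; rewrite -[m x]addr0 lerD ?invr_ge0 // S_sup // truncn_le.
Unshelve. all: end_near. Qed.

Lemma truncn_norm_subn_le (R : realType) (x y : R) :
  ((Num.truncn `|x| - Num.truncn `|y|)%N%:R : R) <= 1 + `|x - y|.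
Proof.
have [xy|yx] := leqP (Num.truncn `|x|) (Num.truncn `|y|).
  by rewrite (eqP xy) addr_ge0.
have /andP [hx _] := truncn_itv (normr_ge0 x).
have /andP [_ hy] := truncn_itv (normr_ge0 y).
by rewrite natrB ?(ltnW yx) //; have := lerB_dist x y; rewrite -natr1 in hy; lra.
Qed.

Definition step_majorant (R : realType) (a : nat -> R) (k x : R) : R :=
  damped_majorant a (expR (- k)) (Num.truncn `|x|).

Lemma step_majorant_le (R : realType) (a : nat -> R) (k x y : R) :
  0 < k -> (forall n, 0 < a n) -> nonincreasing_seq a ->
  step_majorant a k y <= expR k * expR (k * `|x - y|) * step_majorant a k x.
Proof.
move=> k0 a0 a_noninc; rewrite /step_majorant.
have q0 : 0 < expR (- k) := expR_gt0 _.
have q1 : expR (- k) < 1 by rewrite expR_lt1 oppr_lt0.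
apply: le_trans (damped_majorant_leM q0 q1 a0 a_noninc _ (Num.truncn `|x|)) _.
rewrite -expRM_natr -expRN mulNr opprK -expRD.
rewrite ler_pM2r ?damped_majorant_gt0 // ler_expR.
by rewrite -[X in X + _]mulr1 -mulrDr ler_pM2l // truncn_norm_subn_le.
Qed.

Section kernel_constants.
Variables (R : realType) (A : R).

Lemma rho_cE i : rho_c A i = if i is 0 then 1 - A else 2 * i%:R * A.
Proof. by rewrite /rho_c /lam; case: i => [|i] /=; ring. Qed.

Hypotheses (A_gt0 : 0 < A) (A_lt1 : A < 1).

Lemma rho_c_ge i : Num.min (1 - A) (2 * A) <= rho_c A i.
Proof.
rewrite rho_cE ge_min; case: i => [|i]; first by rewrite lexx.
by apply/orP; right; rewrite ler_pM2r // -[X in X <= _]mulr1 ler_pM2l // ler1n.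
Qed.

Lemma rho_c_gt0 i : 0 < rho_c A i.
Proof. by apply: lt_le_trans (rho_c_ge i); rewrite lt_min subr_gt0 A_lt1 mulr_gt0. Qed.

(* [2 i >= 1 + i] for [i >= 1] gives the [1 / (1 + i)] decay. *)
Lemma inv_rho_c_le i : (rho_c A i)^-1 <= ((1 - A)^-1 + A^-1) / (1 + i%:R).
Proof.
rewrite rho_cE; case: i => [|i].
  by rewrite addr0 divr1 lerDl invr_ge0 ltW.
have N_gt0 : 0 < 1 + i.+1%:R :> R by rewrite addr_gt0 ?ltr0Sn.
apply: (@le_trans _ _ (A^-1 / (1 + i.+1%:R))).
  rewrite -invfM lef_pV2 ?posrE ?mulr_gt0 // [A * _]mulrC ler_pM2r //.
  by rewrite mulr_natl mulr2n lerD2r ler1n.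
by rewrite ler_pM2r ?invr_gt0 // lerDr invr_ge0 subr_ge0 ltW.
Qed.
End kernel_constants.

Lemma convolution_rho_kernel_le (R : realType) (A k C x : R) (G : R -> R) (i : nat) :
  0 < A -> A < 1 -> 0 < k -> 2 * k <= Num.sqrt (Num.min (1 - A) (2 * A)) ->
  0 <= C -> (forall y, 0 <= G y) ->
  (forall y, G y <= C * expR (k * `|x - y|) * G x) ->
  (convolution (rho_kernel A i) G x
    <= (2 * C * ((1 - A)^-1 + A^-1) / (1 + i%:R) * G x)%:E)%E.
Proof.
move=> A0 A1 k0 k_le C0 G0 G_le.
have c0 := ltW (rho_c_gt0 A0 A1 i).
have s_ge : 2 * k <= Num.sqrt (rho_c A i).
  by apply: le_trans k_le _; rewrite ler_sqrt // rho_c_ge.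
apply: le_trans (convolution_expR_kernel_le k0 s_ge C0 G0 G_le) _.
rewrite lee_fin sqr_sqrtr //.
have CG0 : 0 <= 2 * C * G x by rewrite !mulr_ge0.
by have := ler_wpM2l CG0 (inv_rho_c_le A0 A1 i); lra.
Qed.

Lemma truncn_norm_cvgy (R : realType) : Num.truncn `|x : R| @[x --> +oo] --> \oo.
Proof.
apply/cvgnyPge => n; near=> x.
rewrite truncn_ge_nat // ger0_norm; last by near: x; exact: nbhs_pinfty_ge.
by near: x; apply: nbhs_pinfty_ge; exact: num_real.
Unshelve. all: end_near. Qed.

Theorem mainTheorem5 (R : realType) (A : R) (theta : R -> R)
  (hA0 : 0 < A) (hA1 : A < 1)
  (htc : continuous theta)
  (htp : theta x @[x --> +oo] --> 0)
  (htm : theta x @[x --> -oo] --> 0) :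
  exists G : R -> R,
    piecewise_constant G /\ (forall x, 0 < G x) /\
    [/\ (forall x, Num.max `|theta x| (theta x ^+ 2) <= G x),
        (forall x, G (- x) = G x),
        (forall x y, 0 <= x -> x <= y -> G y <= G x),
        G x @[x --> +oo] --> 0 &
        exists2 sigma : R, 0 < sigma &
          forall (i : nat) (x : R),
            (convolution (rho_kernel A i) G x <= (sigma / (1 + i%:R) * G x)%:E)%E].
Proof.
have m0 x : 0 <= Num.max `|theta x| (theta x ^+ 2) by rewrite le_max normr_ge0.
have [a [a_gt0 a_noninc a_cvg0 theta_le_a]] := nonincreasing_majorant_seq m0
  (max_norm_sqr_bounded htc htp htm) (max_norm_sqr_le_far htp htm).
pose k := Num.sqrt (Num.min (1 - A) (2 * A)) / 2.
have k_gt0 : 0 < k by rewrite divr_gt0 // sqrtr_gt0 lt_min subr_gt0 hA1 mulr_gt0.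
have q_gt0 : 0 < expR (- k) := expR_gt0 _.
have q_lt1 : expR (- k) < 1 by rewrite expR_lt1 oppr_lt0.
have G_gt0 x : 0 < step_majorant a k x by exact: damped_majorant_gt0.
exists (step_majorant a k); split; first exact: piecewise_constant_truncn_norm.
split=> //; split.
- by move=> x; apply: le_trans (theta_le_a x) (damped_majorant_ge _ _ _).
- by move=> x; rewrite /step_majorant normrN.
- move=> x y x0 xy; rewrite /step_majorant (ger0_norm x0) ger0_norm ?(le_trans x0) //.
  exact/(damped_majorant_noninc q_lt1 a_gt0 a_noninc)/le_truncn.
- exact: cvg_comp (truncn_norm_cvgy R) (damped_majorant_cvg0 q_gt0 q_lt1 a_gt0 a_noninc a_cvg0).
exists (2 * expR k * ((1 - A)^-1 + A^-1)).
  by rewrite !mulr_gt0 ?expR_gt0 ?addr_gt0 ?invr_gt0 ?subr_gt0.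
move=> i x; apply: (@convolution_rho_kernel_le R A k (expR k)) => //.
- by rewrite /k mulrC divfK.
- by move=> y; exact/ltW.
by move=> y; exact: step_majorant_le.
Qed.
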